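(* Let $x_0\ge x_1\ge\cdots\ge x_t$ be a non-increasing sequence of reals and let $f$ be a nonnegative, non-decreasing, continuously differentiable function on $[x_t,x_0]$ such that $x_n-x_{n+1}\ge f(x_{n+1})$ for all $n=0,1,\dots,t-1$. Then $\ln\frac{f(x_0)}{f(x_t)}+\int_{x_t}^{x_0}\frac{1}{f(x)}\,dx\ge t$. *)

From Stdlib Require Import Reals.
From Coquelicot Require Import Coquelicot.
Open Scope R_scope.

(* f' is the derivative of f on the closed interval [a,b], with one-sided
   derivatives at the endpoints (difference quotients taken within [a,b]). *)
Definition derivative_on (a b : R) (f f' : R -> R) : Prop :=
  forall x, a <= x <= b ->
    filterlim (fun y => (f y - f x) / (y - x))
      (within (fun y => a <= y <= b /\ y <> x) (locally x))
      (locally (f' x)).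

Definition C1_on (a b : R) (f : R -> R) : Prop :=
  exists f' : R -> R, derivative_on a b f f' /\
    forall x, a <= x <= b ->
      filterlim f' (within (fun y => a <= y <= b) (locally x)) (locally (f' x)).

(* Each step [x (n+1) <= x n] contributes at least 1: since f is non-decreasing,
   the integral of 1/f over [x (n+1), x n] is at least (x n - x (n+1)) / f (x n)
   >= u^-1 with u = f (x n) / f (x (n+1)), and ln u + u^-1 >= 1 for u > 0.
   The logarithms and integrals of consecutive steps telescope. *)
From Stdlib Require Import Reals Lra Lia.
From Coquelicot Require Import Coquelicot.
Open Scope R_scope.

Lemma ln_plus_inv_ge_1 (u : R) : 0 < u -> ln u + / u >= 1.
Proof.
  intros Hu.
  pose proof (exp_ineq1_le (- ln u)) as Hexp.
  rewrite exp_Ropp, exp_ln in Hexp by exact Hu.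
  lra.
Qed.

Definition continuous_on_interval (a b : R) (f : R -> R) : Prop :=
  forall x, a <= x <= b -> forall eps, 0 < eps -> exists d, 0 < d /\
    forall y, a <= y <= b -> Rabs (y - x) < d -> Rabs (f y - f x) < eps.

Lemma derivative_on_continuous (a b : R) (f f' : R -> R) :
  derivative_on a b f f' -> continuous_on_interval a b f.
Proof.
  intros Hder x Hx eps Heps.
  destruct (Hder x Hx (ball (f' x) 1) (locally_ball _ (mkposreal 1 Rlt_0_1)))
    as [d Hd].
  set (M := Rabs (f' x) + 1).
  assert (HM : 0 < M) by (pose proof (Rabs_pos (f' x)); unfold M; lra).
  exists (Rmin d (eps / M)); split.
  { apply Rmin_pos; [apply cond_pos | apply Rdiv_lt_0_compat; lra]. }
  intros y Hy Hyx.
  destruct (Req_dec y x) as [-> | Hneq].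
  { rewrite Rminus_diag, Rabs_R0; exact Heps. }
  assert (Hyd : Rabs (y - x) < d) by (pose proof (Rmin_l d (eps / M)); lra).
  assert (Hye : Rabs (y - x) * M < eps).
  { pose proof (Rmin_r d (eps / M)).
    apply (Rmult_lt_reg_r (/ M)); [apply Rinv_0_lt_compat; lra |].
    replace (eps * / M) with (eps / M) by reflexivity.
    rewrite Rmult_assoc, Rinv_r, Rmult_1_r by lra. lra. }
  set (q := (f y - f x) / (y - x)).
  assert (Hq : Rabs (q - f' x) < 1) by exact (Hd y Hyd (conj Hy Hneq)).
  assert (Hqx : f y - f x = q * (y - x)) by (unfold q; field; lra).
  assert (HqM : Rabs q < M).
  { pose proof (Rabs_triang_inv q (f' x)); unfold M; lra. }
  rewrite Hqx, Rabs_mult.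
  pose proof (Rabs_pos q); pose proof (Rabs_pos (y - x)); nra.
Qed.

(* Composing with [clamp a b] extends a function continuous on [a, b] to a
   function continuous on all of R, as [ex_RInt_continuous] requires. *)
Definition clamp (a b y : R) : R := Rmax a (Rmin b y).

Lemma clamp_in (a b y : R) : a <= b -> a <= clamp a b y <= b.
Proof. intros. unfold clamp, Rmax, Rmin. repeat destruct Rle_dec; lra. Qed.

Lemma clamp_id (a b y : R) : a <= y <= b -> clamp a b y = y.
Proof. intros. unfold clamp, Rmax, Rmin. repeat destruct Rle_dec; lra. Qed.

Lemma clamp_1_lipschitz (a b y z : R) :
  Rabs (clamp a b y - clamp a b z) <= Rabs (y - z).
Proof.
  unfold clamp, Rmax, Rmin. repeat destruct Rle_dec;
  unfold Rabs; repeat destruct Rcase_abs; lra.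
Qed.

Lemma continuity_pt_clamp (a b : R) (f : R -> R) (z : R) :
  a <= b -> continuous_on_interval a b f ->
  continuity_pt (fun y => f (clamp a b y)) z.
Proof.
  intros Hab Hf eps Heps.
  destruct (Hf (clamp a b z) (clamp_in a b z Hab) eps Heps) as [d [Hd Hfd]].
  exists d; split; [exact Hd |].
  intros y [_ Hy]; simpl in *; unfold R_dist in *.
  apply Hfd; [apply clamp_in; exact Hab |].
  pose proof (clamp_1_lipschitz a b y z); lra.
Qed.

Lemma ex_RInt_inv_on_interval (a b c d : R) (f : R -> R) :
  continuous_on_interval a b f -> (forall y, a <= y <= b -> 0 < f y) ->
  a <= c -> c <= d -> d <= b -> ex_RInt (fun y => / f y) c d.
Proof.
  intros Hf Hpos Hac Hcd Hdb.
  assert (Hab : a <= b) by lra.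
  apply (ex_RInt_ext (fun y => / f (clamp a b y))).
  { intros y Hy; rewrite Rmin_left, Rmax_right in Hy by lra.
    rewrite clamp_id by lra; reflexivity. }
  apply (@ex_RInt_continuous R_CompleteNormedModule); intros z _.
  apply continuity_pt_filterlim, (continuity_pt_inv (fun y => f (clamp a b y))).
  - exact (continuity_pt_clamp a b f z Hab Hf).
  - pose proof (Hpos _ (clamp_in a b z Hab)); lra.
Qed.

Lemma one_step_bound (c d : R) (f : R -> R) :
  c <= d -> 0 < f c -> (forall y, c <= y <= d -> f c <= f y <= f d) ->
  ex_RInt (fun y => / f y) c d -> d - c >= f c ->
  ln (f d / f c) + RInt (fun y => / f y) c d >= 1.
Proof.
  intros Hcd Hc Hmono Hint Hstep.
  assert (Hd : 0 < f d) by (pose proof (Hmono d (conj Hcd (Rle_refl d))); lra).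
  assert (Hlow : RInt (fun _ => / f d) c d <= RInt (fun y => / f y) c d).
  { apply RInt_le; [exact Hcd | apply ex_RInt_const | exact Hint |].
    intros y [Hcy Hyd]; pose proof (Hmono y (conj (Rlt_le _ _ Hcy) (Rlt_le _ _ Hyd))).
    apply Rinv_le_contravar; lra. }
  rewrite RInt_const in Hlow.
  unfold scal, mult in Hlow; simpl in Hlow; unfold mult in Hlow; simpl in Hlow.
  pose proof (ln_plus_inv_ge_1 (f d / f c) (Rdiv_lt_0_compat _ _ Hd Hc)) as Hln.
  replace (/ (f d / f c)) with (f c * / f d) in Hln by (field; lra).
  assert (Hratio : f c * / f d <= (d - c) * / f d).
  { apply Rmult_le_compat_r; [left; apply Rinv_0_lt_compat |]; lra. }
  lra.
Qed.

Lemma nonincreasing_le (t : nat) (x : nat -> R) :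
  (forall n, (n < t)%nat -> x (S n) <= x n) ->
  forall j k, (j <= k <= t)%nat -> x k <= x j.
Proof.
  intros Hx j k [Hjk Hkt]; induction Hjk as [| k Hjk IH].
  - apply Rle_refl.
  - pose proof (Hx k ltac:(lia)); pose proof (IH ltac:(lia)); lra.
Qed.

Lemma telescoping_bound (t : nat) (x : nat -> R) (f : R -> R) :
  (forall k, (k <= t)%nat -> 0 < f (x k)) ->
  (forall k, (k < t)%nat -> ex_RInt (fun y => / f y) (x (S k)) (x k)) ->
  (forall k, (k < t)%nat ->
     ln (f (x k) / f (x (S k))) + RInt (fun y => / f y) (x (S k)) (x k) >= 1) ->
  ex_RInt (fun y => / f y) (x t) (x 0%nat) /\
  ln (f (x 0%nat) / f (x t)) + RInt (fun y => / f y) (x t) (x 0%nat) >= INR t.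
Proof.
  induction t as [| t IH]; intros Hpos Hint Hstep.
  - split; [apply ex_RInt_point |].
    pose proof (Hpos 0%nat (le_n 0)).
    rewrite RInt_point, Rdiv_diag, ln_1 by lra.
    unfold zero; simpl; lra.
  - destruct IH as [Hint_t Hbound_t].
    { intros k Hk; apply Hpos; lia. }
    { intros k Hk; apply Hint; lia. }
    { intros k Hk; apply Hstep; lia. }
    pose proof (Hint t (Nat.lt_succ_diag_r t)) as Hint_St.
    pose proof (Hstep t (Nat.lt_succ_diag_r t)) as Hstep_t.
    pose proof (Hpos 0%nat ltac:(lia)); pose proof (Hpos t ltac:(lia)).
    pose proof (Hpos (S t) (le_n _)).
    split; [exact (ex_RInt_Chasles _ _ _ _ Hint_St Hint_t) |].
    rewrite <- (RInt_Chasles _ _ _ _ Hint_St Hint_t), S_INR.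
    replace (f (x 0%nat) / f (x (S t)))
      with ((f (x t) / f (x (S t))) * (f (x 0%nat) / f (x t))) by (field; lra).
    rewrite ln_mult by (apply Rdiv_lt_0_compat; lra).
    unfold plus; simpl; lra.
Qed.

Theorem mainTheorem9 (t : nat) (x : nat -> R) (f : R -> R)
  (Hx : forall n, (n < t)%nat -> x (S n) <= x n)
  (Hnonneg : forall y, x t <= y <= x 0%nat -> 0 <= f y)
  (Hmono : forall y z, x t <= y <= x 0%nat -> x t <= z <= x 0%nat -> y <= z -> f y <= f z)
  (HC1 : C1_on (x t) (x 0%nat) f)
  (Hstep : forall n, (n < t)%nat -> x n - x (S n) >= f (x (S n)))
  (Hpos : 0 < f (x t)) :
  ln (f (x 0%nat) / f (x t)) + RInt (fun y => / f y) (x t) (x 0%nat) >= INR t.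
Proof.
  assert (Hrange : forall k, (k <= t)%nat -> x t <= x k <= x 0%nat)
    by (intros; split; apply (nonincreasing_le t x Hx); lia).
  assert (Hfpos : forall y, x t <= y <= x 0%nat -> 0 < f y).
  { intros y Hy; pose proof (Hmono (x t) y ltac:(lra) Hy (proj1 Hy)); lra. }
  destruct HC1 as [f' [Hder _]].
  assert (Hint : forall k, (k < t)%nat -> ex_RInt (fun y => / f y) (x (S k)) (x k)).
  { intros k Hk; pose proof (Hrange k ltac:(lia)); pose proof (Hrange (S k) Hk).
    apply (ex_RInt_inv_on_interval (x t) (x 0%nat));
      [exact (derivative_on_continuous _ _ _ _ Hder) | exact Hfpos | lra | | lra].
    apply Hx; exact Hk. }
  apply (telescoping_bound t x f); [intros; apply Hfpos, Hrange; lia | exact Hint |].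
  intros k Hk; pose proof (Hrange k ltac:(lia)); pose proof (Hrange (S k) Hk).
  apply one_step_bound; [apply Hx; exact Hk | apply Hfpos; lra | | apply Hint; exact Hk |].
  - intros y Hy; split; apply Hmono; lra.
  - apply Hstep; exact Hk.
Qed.
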